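(* Let $\gamma\in\mathbb C$, $k\in\{1,\dots,n\}$, and $H_k(\gamma)=I-\gamma D^k$. Then $$K_h(H_k(\gamma))=\Bigl(\frac{|\gamma|\,n!}{(n-k)!}\Bigr)^{1/k}.$$
   Context: Let $n\ge1$ and $\mathcal P_n$ the complex vector space of polynomials in one complex variable of degree at most $n$; $D$ is differentiation and $I$ the identity on $\mathcal P_n$. For nonzero $f$, $Z(f)$ is the multiset of roots of $f$ (with multiplicity; empty for nonzero constants); $Z(0)=\mathbb C$. For finite nonempty $A,B\subset\mathbb C$, $d_h(A,B)=\max_{y\in B}\min_{x\in A}|x-y|$, with conventions $d_h(\emptyset,\emptyset)=0$, $d_h(A,\emptyset)=d_h(\emptyset,A)=+\infty$ for $A\ne\emptyset$, and $d_h(A,B)=0$ if one of $A,B$ equals $\mathbb C$ and the other is nonempty. $K_h(T)=\sup_{f\in\mathcal P_n}d_h(Z(f),Z(Tf))$. *)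

From HB Require Import structures.
From mathcomp Require Import all_boot all_order all_algebra.
From mathcomp Require Import all_classical all_reals all_analysis.
From mathcomp.real_closed Require Import complex.
Set Implicit Arguments. Unset Strict Implicit. Unset Printing Implicit Defensive.
Import Order.TTheory GRing.Theory Num.Theory.
Local Open Scope classical_set_scope.
Local Open Scope ring_scope.

(* Z(f): the set of roots of f (multiplicities are irrelevant for d_h);
   Z(0) = C, Z(c) = empty for nonzero constants c. *)
Definition Zr (R : realType) (f : {poly R[i]}) : set R[i] := [set x | root f x].

Definition d_h (R : realType) (A B : set R[i]) : \bar R :=
  if `[< A = set0 >] && `[< B = set0 >] then 0%E
  else if `[< A = set0 >] || `[< B = set0 >] then +oo%E
  else if `[< A = setT >] || `[< B = setT >] then 0%E
  else ereal_sup [set ereal_inf [set (Normc.normc (x - y))%:E | x in A] | y in B].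

Definition K_h (R : realType) (n : nat) (T : {poly R[i]} -> {poly R[i]}) : \bar R :=
  ereal_sup [set d_h (Zr f) (Zr (T f)) | f in [set f : {poly R[i]} | (size f <= n.+1)%N]].

Definition Hk (R : realType) (k : nat) (gamma : R[i]) (f : {poly R[i]}) : {poly R[i]} :=
  f - gamma *: f^`(k).

(* The upper bound rests on a derivative estimate: if every root of a polynomial
   g of degree m lies at distance at least s from y, then
   |g^(k)(y)| s^k <= m^_k |g(y)|.  Writing g = h (X - rho), the Leibniz rule
   g^(k+1) = h^(k+1) (X - rho) + (k+1) h^(k) and the Pascal rule
   m^_(k+1) = (m-1)^_(k+1) + (k+1) (m-1)^_k reduce it to the same estimate for
   h; the inequality is strict when the distances exceed s and 0 < k <= m.
   If a root y of f - gamma f^(k) were farther than r = (|gamma| n^_k)^(1/k)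
   from every root of f, then f(y) = gamma f^(k)(y) would give
   r^k < |gamma| n^_k = r^k.  The bound is attained by f = X^n: its only root 0
   is at distance r from the root w of w^k = gamma n^_k of
   H_k(gamma) X^n = X^(n-k) (X^k - gamma n^_k). *)
From HB Require Import structures.
From mathcomp Require Import all_boot all_order all_algebra.
From mathcomp Require Import all_classical all_reals all_analysis.
From mathcomp.real_closed Require Import complex.
From mathcomp Require Import zify ring.
Set Implicit Arguments. Unset Strict Implicit. Unset Printing Implicit Defensive.
Import Order.TTheory GRing.Theory Num.Theory.
Local Open Scope ring_scope.

Lemma ffactS m j : (m.+1 ^_ j.+1 = m ^_ j.+1 + j.+1 * m ^_ j)%N.
Proof.
rewrite ffactSS ffactnSr; case: (leqP j m) => [jm|mj].
  rewrite -{1}(subnKC jm) mulnC; lia.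
by rewrite ffact_small // !muln0.
Qed.

Lemma leq_ffact2l m1 m2 k : (m1 <= m2)%N -> (m1 ^_ k <= m2 ^_ k)%N.
Proof. by move=> le_m12; rewrite -!bin_ffact leq_mul2r leq_bin2l ?orbT. Qed.

Lemma derivnS_mulXsubC (R : comNzRingType) (h : {poly R}) c j :
  (h * ('X - c%:P))^`(j.+1) = h^`(j.+1) * ('X - c%:P) + h^`(j) *+ j.+1.
Proof.
elim: j => [|j IH].
  by rewrite derivn1 derivn0 derivM derivXsubC mulr1.
rewrite derivnS IH derivD derivM derivXsubC mulr1 derivMn.
by rewrite -!derivnS -addrA -mulrS.
Qed.

Lemma size_derivn_leq (R : nzSemiRingType) (p : {poly R}) j :
  (size p^`(j) <= size p)%N.
Proof.
elim: j => [|j IH]; first by rewrite derivn0.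
rewrite derivnS; have [->|nz] := eqVneq p^`(j) 0; first by rewrite deriv0 size_poly0.
exact: leq_trans (ltnW (lt_size_deriv nz)) IH.
Qed.

Lemma lt_size_derivn (R : nzSemiRingType) (p : {poly R}) j :
  p != 0 -> (0 < j)%N -> (size p^`(j) < size p)%N.
Proof.
case: j => // j p0 _; rewrite derivSn.
exact: leq_ltn_trans (size_derivn_leq (p^`()) j) (lt_size_deriv p0).
Qed.

Section RootDistance.
Variable R : rcfType.
Local Notation C := R[i].
Local Notation normc := (@Normc.normc R).

Lemma normc_ge0 (x : C) : 0 <= normc x.
Proof. by case: x => a b; exact: sqrtr_ge0. Qed.

Lemma normc_gt0 (x : C) : x != 0 -> 0 < normc x.
Proof.
move=> x0; rewrite lt_def normc_ge0 andbT.
by apply: contra x0 => /eqP/Normc.eq0_normc ->.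
Qed.

Lemma normcX (x : C) k : normc (x ^+ k) = normc x ^+ k.
Proof.
elim: k => [|k IH]; first by rewrite !expr0 Normc.normc1.
by rewrite !exprS Normc.normcM IH.
Qed.

Lemma normc_natr m : normc (m%:R : C) = m%:R.
Proof. by rewrite normcMn Normc.normc1. Qed.

Lemma normc_subC (x y : C) : normc (x - y) = normc (y - x).
Proof. by rewrite -normcN opprB. Qed.

Lemma size_XsubC_factor (g : {poly C}) m : size g = m.+2 ->
  exists h rho, g = h * ('X - rho%:P) /\ size h = m.+1.
Proof.
move=> sg; have /closed_rootP[rho /factor_theorem[h gE]] : size g != 1%N by rewrite sg.
exists h, rho; split => //; move: sg; rewrite gE.
have [->|h0] := eqVneq h 0; first by rewrite mul0r size_poly0.
by rewrite size_Mmonic ?monicXsubC // size_XsubC addn2 => -[].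
Qed.

Lemma normc_derivn_horner_le m (g : {poly C}) y s k : size g = m.+1 -> 0 <= s ->
  (forall x, root g x -> s <= normc (x - y)) ->
  normc (g^`(k)).[y] * s ^+ k <= (m ^_ k)%:R * normc g.[y].
Proof.
elim: m g k => [|m IH] g [|k] sg s0 far;
  rewrite ?derivn0 ?expr0 ?ffactn0 ?mulr1 ?mul1r //.
  by rewrite derivn_poly0 ?sg // horner0 Normc.normc0 mul0r mulr_ge0 ?normc_ge0.
have [h [rho [gE sh]]] := size_XsubC_factor sg.
have far_h x : root h x -> s <= normc (x - y).
  by move=> hx; apply: far; rewrite gE rootM hx.
have s_rho : s <= normc (y - rho).
  by rewrite normc_subC; apply: far; rewrite gE rootM root_XsubC eqxx orbT.
rewrite gE derivnS_mulXsubC hornerD hornerMn !hornerM !hornerXsubC ffactS natrD natrM.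
apply: (le_trans (ler_wpM2r (exprn_ge0 _ s0) (le_normcD _ _))).
rewrite Normc.normcM normcMn !mulrDl Normc.normcM; apply: lerD.
  by rewrite mulrAC mulrA; apply: ler_wpM2r; [exact: normc_ge0 | exact: IH].
rewrite exprSr -[_ *+ k.+1]mulr_natl -!mulrA; apply: ler_wpM2l; first exact: ler0n.
rewrite mulrA [X in _ <= X]mulrA; apply: ler_pM => //.
- by rewrite mulr_ge0 ?normc_ge0 ?exprn_ge0.
- exact: IH.
Qed.

Lemma normc_derivn_horner_lt m (g : {poly C}) y s k : size g = m.+1 -> 0 <= s ->
  (forall x, root g x -> s < normc (x - y)) -> (0 < k <= m)%N ->
  normc (g^`(k)).[y] * s ^+ k < (m ^_ k)%:R * normc g.[y].
Proof.
case: m k => [|m] [|k] // sg s0 far km.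
have [h [rho [gE sh]]] := size_XsubC_factor sg.
have far_h x : root h x -> s <= normc (x - y).
  by move=> hx; apply/ltW/far; rewrite gE rootM hx.
have s_rho : s < normc (y - rho).
  by rewrite normc_subC; apply: far; rewrite gE rootM root_XsubC eqxx orbT.
have hy : 0 < normc h.[y].
  apply: normc_gt0; apply: contraTneq s0 => hy0.
  have := far y; rewrite gE rootM /root hy0 eqxx subrr Normc.normc0 => /(_ isT).
  by rewrite -ltNge.
rewrite gE derivnS_mulXsubC hornerD hornerMn !hornerM !hornerXsubC ffactS natrD natrM.
apply: (le_lt_trans (ler_wpM2r (exprn_ge0 _ s0) (le_normcD _ _))).
rewrite Normc.normcM normcMn !mulrDl Normc.normcM; apply: ler_ltD.
  rewrite mulrAC mulrA; apply: ler_wpM2r; first exact: normc_ge0.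
  exact: normc_derivn_horner_le.
rewrite exprSr -[_ *+ k.+1]mulr_natl -!mulrA ltr_pM2l ?ltr0n //.
rewrite mulrA [X in _ < X]mulrA.
apply: (le_lt_trans (ler_wpM2r s0 (normc_derivn_horner_le k sh s0 far_h))).
by rewrite ltr_pM2l // mulr_gt0 // ltr0n ffact_gt0.
Qed.

End RootDistance.

Section HausdorffBound.
Variable R : realType.
Local Notation C := R[i].
Local Notation normc := (@Normc.normc R).

Lemma size_Hk k (gamma : C) (f : {poly C}) : (0 < k)%N -> size (Hk k gamma f) = size f.
Proof.
move=> k0; rewrite /Hk; have [->|f0] := eqVneq f 0.
  by rewrite derivn_poly0 ?size_poly0 // scaler0 subr0 size_poly0.
rewrite size_addl // size_opp.
exact: leq_ltn_trans (size_scale_leq _ _) (lt_size_derivn f0 k0).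
Qed.

Lemma Zr_eq0 (p : {poly C}) : Zr p = set0 <-> size p = 1%N.
Proof.
split => [Zp0|sp1].
  apply/eqP; apply: contraT => /closed_rootP[x px].
  by have : Zr p x by []; rewrite Zp0.
apply/seteqP; split => x //= px.
by have := introT (closed_rootP p) (ex_intro _ x px); rewrite sp1.
Qed.

Lemma Zr_neqT (p : {poly C}) : p != 0 -> Zr p <> setT.
Proof.
move=> /closed_nonrootP[x px] ZpT.
have : Zr p x by rewrite ZpT.
by rewrite /Zr /= (negbTE px).
Qed.

Lemma d_h_le (A B : set C) (r : R) : 0 <= r -> (A = set0 <-> B = set0) ->
  (forall y, B y -> exists2 x, A x & normc (x - y) <= r) -> (d_h A B <= r%:E)%E.
Proof.
move=> r0 AB near; rewrite /d_h.
case: (asboolP (A = set0)) => A0; case: (asboolP (B = set0)) => B0 /=.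
- by rewrite lee_fin.
- by case: B0; apply/AB.
- by case: A0; apply/AB.
case: ifP => _; first by rewrite lee_fin.
apply: ge_ereal_sup => _ [y By <-]; apply: ge_ereal_inf.
have [x Ax le_xy] := near y By.
by exists (normc (x - y))%:E; [exists x | rewrite lee_fin].
Qed.

Lemma d_h_ge (A B : set C) (r : R) (w : C) : A <> set0 -> A <> setT -> B <> setT ->
  B w -> (forall x, A x -> r <= normc (x - w)) -> (r%:E <= d_h A B)%E.
Proof.
move=> A0 AT BT Bw far; have B0 : B <> set0 by move=> B0; rewrite B0 in Bw.
rewrite /d_h; case: (asboolP (A = set0)) => // _; case: (asboolP (B = set0)) => // _ /=.
case: (asboolP (A = setT)) => // _; case: (asboolP (B = setT)) => // _ /=.
apply: ereal_sup_ge; exists (ereal_inf [set (normc (x - w))%:E | x in A]).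
  by exists w.
by apply: le_ereal_inf_tmp => _ [x Ax <-]; rewrite lee_fin far.
Qed.

Lemma root_Hk_far_lt k (gamma : C) (f : {poly C}) y r : (0 < k)%N -> 0 <= r ->
  root (Hk k gamma f) y -> (forall x, root f x -> r < normc (x - y)) ->
  r ^+ k < normc gamma * ((size f).-1 ^_ k)%:R.
Proof.
move=> k0 r0 Hy far.
have fy : f.[y] != 0.
  apply: contraTneq r0 => fy0; have := far y; rewrite /root fy0 eqxx subrr Normc.normc0.
  by move=> /(_ isT); rewrite -ltNge.
have f0 : f != 0 by apply: contraNneq fy => ->; rewrite horner0.
move: Hy; rewrite /Hk rootE hornerD hornerN hornerZ subr_eq0 => /eqP fyE.
have sf : size f = (size f).-1.+1 by rewrite prednK // size_poly_gt0.
have [km|mk] := leqP k (size f).-1; last first.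
  by move: fy; rewrite fyE derivn_poly0 ?horner0 ?mulr0 ?eqxx // sf.
have g0 : gamma != 0 by apply: contraNneq fy => g0; rewrite fyE g0 mul0r.
have normc_fy : normc f.[y] = normc gamma * normc (f^`(k)).[y].
  by rewrite {1}fyE Normc.normcM.
rewrite -(ltr_pM2r (normc_gt0 fy)) -mulrA mulrC {1}normc_fy -mulrA.
rewrite ltr_pM2l ?normc_gt0 //.
by apply: normc_derivn_horner_lt sf r0 far _; rewrite k0.
Qed.

Lemma root_Hk_near k (gamma : C) n r (f : {poly C}) y : (0 < k)%N -> 0 <= r ->
  r ^+ k = normc gamma * (n ^_ k)%:R -> (size f <= n.+1)%N ->
  root (Hk k gamma f) y -> exists2 x, root f x & normc (x - y) <= r.
Proof.
move=> k0 r0 rk sf Hy; apply: contrapT => /forall2NP far.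
have {}far x : root f x -> r < normc (x - y).
  by move=> fx; case: (far x) => // /negP; rewrite -ltNge.
have := root_Hk_far_lt k0 r0 Hy far; rewrite rk ltNge => /negP; apply.
by rewrite ler_wpM2l ?normc_ge0 // ler_nat leq_ffact2l //; lia.
Qed.

Lemma root_Hk_Xn k (gamma w : C) n : (k <= n)%N ->
  w ^+ k = gamma * (n ^_ k)%:R -> root (Hk k gamma 'X^n) w.
Proof.
move=> kn wk; rewrite rootE /Hk hornerD hornerN hornerZ derivnXn hornerMn !hornerXn.
by rewrite -(subnK kn) exprD subnK // wk -mulr_natr; apply/eqP; ring.
Qed.

End HausdorffBound.

Lemma powR_invnK (R : realType) (x : R) k : 0 <= x -> (0 < k)%N ->
  (x `^ k%:R^-1) ^+ k = x.
Proof.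
move=> x0 k0; rewrite -powR_mulrn ?powR_ge0 // -powRrM.
by rewrite mulVf ?pnatr_eq0 -?lt0n // powRr1.
Qed.

Theorem mainTheorem16 (R : realType) (n : nat) (gamma : R[i]) (k : nat) :
  (1 <= n)%N -> (1 <= k)%N -> (k <= n)%N ->
  K_h n (Hk k gamma) =
  (powR (Normc.normc gamma * n`!%:R / (n - k)`!%:R) (k%:R^-1))%:E.
Proof.
move=> n1 k1 kn.
rewrite -mulrA; have -> : n`!%:R / (n - k)`!%:R = (n ^_ k)%:R :> R.
  by rewrite -(ffact_fact kn) natrM mulfK // pnatr_eq0 -lt0n fact_gt0.
set r := powR _ _.
have rk : r ^+ k = Normc.normc gamma * (n ^_ k)%:R.
  by rewrite powR_invnK // mulr_ge0 ?normc_ge0.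
have r0 : 0 <= r by apply: powR_ge0.
apply/le_anti/andP; split.
  apply: ge_ereal_sup => _ [f sf <-]; apply: d_h_le => //.
    by split=> /Zr_eq0 Z0; apply/Zr_eq0; rewrite ?size_Hk // -(size_Hk gamma f k1).
  by move=> y; apply: root_Hk_near k1 r0 rk sf.
have [w wk] : exists w : R[i], w ^+ k = gamma * (n ^_ k)%:R.
  by exists (k.-root (gamma * (n ^_ k)%:R)); rewrite rootCK.
have normc_w : Normc.normc w = r.
  apply: (pexpIrn k1); rewrite ?inE ?nnegrE ?normc_ge0 ?powR_ge0 //=.
  by rewrite -normcX wk Normc.normcM normc_natr rk.
apply: ereal_sup_ge; exists (d_h (Zr 'X^n) (Zr (Hk k gamma 'X^n))).
  by exists 'X^n => //; rewrite /= size_polyXn.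
apply: (d_h_ge (w := w)).
- by move/Zr_eq0; rewrite size_polyXn => -[]; lia.
- by apply: Zr_neqT; rewrite monic_neq0 ?monicXn.
- by apply: Zr_neqT; rewrite -size_poly_eq0 size_Hk // size_polyXn.
- exact: root_Hk_Xn.
move=> x; rewrite /Zr /= rootE hornerXn expf_eq0 => /andP[_ /eqP ->].
by rewrite sub0r normcN normc_w.
Qed.
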